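(* Let $x,y\in\{a,b\}^*$ be two different words and let $\omega=xy^{-1}\in\mathbf{F}_2$. Then the pair $(x,y)$ can be separated exactly by a 2-state MCQFA (with complex amplitudes) if and only if the image of the word map $f_\omega: SU(2)\times SU(2)\to SU(2)$ contains the matrix $\begin{pmatrix} i & 0\\ 0 & -i\end{pmatrix}$.
   Context: $\mathbf{F}_2$ is the free group on generators $a,b$, i.e. reduced words over $\{a,b,a^{-1},b^{-1}\}$ with concatenation. For a group $G$ and $\omega\in\mathbf{F}_2$, the word map $f_\omega:G\times G\to G$ sends $(g,h)$ to the element obtained from $\omega$ by substituting $g$ for $a$ and $h$ for $b$ (and $g^{-1},h^{-1}$ for $a^{-1},b^{-1}$). $SU(2)$ is the group of $2\times 2$ complex unitary matrices of determinant $1$. A 2-state Moore–Crutchfield quantum finite automaton (MCQFA) over $\{a,b\}$ consists of unitaries $U_a,U_b\in\mathbb{C}^{2\times 2}$, an initial unit vector $|u_0\rangle\in\mathbb{C}^2$ and a set of accepting basis states; on input $w=w_1\cdots w_k$ the final state is $U_{w_k}\cdots U_{w_1}|u_0\rangle$ and the acceptance probability is the sum of the squared moduli of its accepting coordinates. The pair $(x,y)$ is separated exactly if one word is accepted with probability $1$ and the other with probability $0$. *)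

(* Complex amplitudes: an arbitrary numClosedFieldType C. *)
From HB Require Import structures.
From mathcomp Require Import all_boot all_order all_algebra.
Set Implicit Arguments. Unset Strict Implicit. Unset Printing Implicit Defensive.
Import Order.TTheory GRing.Theory Num.Theory.
Local Open Scope ring_scope.

Inductive letter := La | Lb.

(* letters of the free group F_2: (c, false) = c, (c, true) = c^{-1} *)
Definition fletter := (letter * bool)%type.

Definition pos_word (x : seq letter) : seq fletter := [seq (c, false) | c <- x].

Definition inv_fword (w : seq fletter) : seq fletter :=
  rev [seq (p.1, ~~ p.2) | p <- w].

(* omega = x y^{-1}, as a (possibly non-reduced) word representing the
   element of F_2 *)
Definition omega (x y : seq letter) : seq fletter :=
  pos_word x ++ inv_fword (pos_word y).

Section Defs.
Variable C : numClosedFieldType.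

Definition adjmx (n m : nat) (A : 'M[C]_(n, m)) : 'M[C]_(m, n) :=
  (map_mx Num.conj A)^T.

Definition unitary (A : 'M[C]_2) : Prop := A *m adjmx A = 1%:M.

Definition SU2 (A : 'M[C]_2) : Prop := unitary A /\ \det A = 1.

Definition word_map (w : seq fletter) (g h : 'M[C]_2) : 'M[C]_2 :=
  foldr (fun p M =>
           (let G := if p.1 is La then g else h in
            if p.2 then invmx G else G) *m M) 1%:M w.

Record MCQFA := {
  Ua : 'M[C]_2;
  Ub : 'M[C]_2;
  u0 : 'cV[C]_2;
  acc : {set 'I_2}
}.

Definition MCQFA_wf (M : MCQFA) : Prop :=
  [/\ unitary (Ua M), unitary (Ub M) & \sum_i `|u0 M i 0| ^+ 2 = 1].

Definition final_state (M : MCQFA) (w : seq letter) : 'cV[C]_2 :=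
  foldl (fun v c => (if c is La then Ua M else Ub M) *m v) (u0 M) w.

Definition acc_prob (M : MCQFA) (w : seq letter) : C :=
  \sum_(i in acc M) `|final_state M w i 0| ^+ 2.

Definition separates_exactly (M : MCQFA) (x y : seq letter) : Prop :=
  (acc_prob M x = 1 /\ acc_prob M y = 0) \/ (acc_prob M x = 0 /\ acc_prob M y = 1).

Definition diag_i_mi : 'M[C]_2 :=
  \matrix_(i < 2, j < 2)
    (if i == j then (if i == ord0 then 'i else - 'i) else 0).

End Defs.

From HB Require Import structures.
From mathcomp Require Import all_boot all_order all_algebra.
From mathcomp Require Import ring.
Set Implicit Arguments. Unset Strict Implicit. Unset Printing Implicit Defensive.
Import Order.TTheory GRing.Theory Num.Theory.
Local Open Scope ring_scope.

(* With A_w the transition matrix of the word w, exact separation means that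
   the final states A_x u0 and A_y u0 are orthogonal unit vectors.  Since A_w†
   is the word map of w at (U_a†, U_b†), and rescaling these two matrices
   into SU(2) only rescales word maps, their image W under f_omega lies in
   SU(2) and satisfies <u0, W u0> = 0.  Completing u0 to an orthonormal basis puts a zero in a
   diagonal entry of W, so W is traceless, hence unitarily conjugate to
   diag(i, -i); and word maps commute with simultaneous conjugation.
   Conversely, if f_omega(g, h) = diag(i, -i) = D, then w = (1, 1)/sqrt 2 is
   orthogonal to D w, and the automaton with U_a = g†, U_b = h† written in a
   suitable orthonormal basis sends x and y to the two basis vectors. *)

Section ExactSeparation.
Variable C : numClosedFieldType.
Notation i0 := (@ord0 1).
Notation i1 := (@ord_max 1).
Notation D := (diag_i_mi C).

Definition mk2 (a b c d : C) : 'M[C]_2 := \matrix_(i < 2, j < 2)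
  if i == i0 then (if j == i0 then a else b) else (if j == i0 then c else d).
Definition mkv (a b : C) : 'cV[C]_2 := \col_(i < 2) if i == i0 then a else b.

Lemma ord2P (i : 'I_2) : i = i0 \/ i = i1.
Proof. by case: i => [[|[|//]]] Hi; [left|right]; apply: val_inj. Qed.

Lemma sum_ord2 (F : 'I_2 -> C) : \sum_i F i = F i0 + F i1.
Proof. by rewrite !big_ord_recl big_ord0 addr0; congr (_ + F _); apply: val_inj. Qed.

Lemma mx2E (A : 'M[C]_2) : A = mk2 (A i0 i0) (A i0 i1) (A i1 i0) (A i1 i1).
Proof.
by apply/matrixP => i j; rewrite mxE; case: (ord2P i) => ->; case: (ord2P j) => ->.
Qed.

Lemma cV2E (v : 'cV[C]_2) : v = mkv (v i0 0) (v i1 0).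
Proof. by apply/matrixP => i j; rewrite mxE (ord1 j); case: (ord2P i) => ->. Qed.

Lemma mk2_inj a b c d a' b' c' d' : mk2 a b c d = mk2 a' b' c' d' ->
  [/\ a = a', b = b', c = c' & d = d'].
Proof.
move/matrixP=> E.
by split; [move: (E i0 i0) | move: (E i0 i1) | move: (E i1 i0) | move: (E i1 i1)];
  rewrite !mxE.
Qed.

Lemma mul_mk2 a b c d a' b' c' d' :
  mk2 a b c d *m mk2 a' b' c' d' =
  mk2 (a * a' + b * c') (a * b' + b * d') (c * a' + d * c') (c * b' + d * d').
Proof.
apply/matrixP => i j; rewrite !mxE sum_ord2 !mxE.
by case: (ord2P i) => ->; case: (ord2P j) => ->.
Qed.

Lemma mul_mk2_mkv a b c d x y :
  mk2 a b c d *m mkv x y = mkv (a * x + b * y) (c * x + d * y).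
Proof.
by apply/matrixP => i j; rewrite !mxE sum_ord2 !mxE; case: (ord2P i) => ->.
Qed.

Lemma adjmx_mk2 a b c d : adjmx (mk2 a b c d) = mk2 a^* c^* b^* d^*.
Proof.
by apply/matrixP => i j; rewrite !mxE; case: (ord2P i) => ->; case: (ord2P j) => ->.
Qed.

Lemma scale_mk2 k a b c d : k *: mk2 a b c d = mk2 (k * a) (k * b) (k * c) (k * d).
Proof.
by apply/matrixP => i j; rewrite !mxE; case: (ord2P i) => ->; case: (ord2P j) => ->.
Qed.

Lemma mk2_1 : mk2 1 0 0 1 = 1%:M.
Proof.
by apply/matrixP => i j; rewrite !mxE; case: (ord2P i) => ->; case: (ord2P j) => ->.
Qed.

Lemma det_mk2 a b c d : \det (mk2 a b c d) = a * d - b * c.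
Proof.
rewrite (expand_det_row _ i0) !big_ord_recl big_ord0 /cofactor !det_mx11 !mxE /=.
by rewrite /bump /= expr0 expr1 !mul1r mulN1r addr0 mulrN.
Qed.

Lemma diag_i_miE : D = mk2 'i 0 0 (- 'i).
Proof. by rewrite (mx2E D) !mxE. Qed.

Lemma adjmxM m n p (A : 'M[C]_(m, n)) (B : 'M[C]_(n, p)) :
  adjmx (A *m B) = adjmx B *m adjmx A.
Proof. by rewrite /adjmx map_mxM trmx_mul. Qed.

Lemma adjmxK m n (A : 'M[C]_(m, n)) : adjmx (adjmx A) = A.
Proof. by apply/matrixP => i j; rewrite !mxE conjCK. Qed.

Lemma adjmx1 n : adjmx (1%:M : 'M[C]_n) = 1%:M.
Proof. by rewrite /adjmx map_mx1 trmx1. Qed.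

Lemma adjmxZ m n k (A : 'M[C]_(m, n)) : adjmx (k *: A) = k^* *: adjmx A.
Proof. by rewrite /adjmx map_mxZ linearZ. Qed.

Lemma det_adjmx n (A : 'M[C]_n) : \det (adjmx A) = (\det A)^*.
Proof. by rewrite /adjmx det_tr det_map_mx. Qed.

Lemma mulmx1_invmx n (A B : 'M[C]_n.+1) : A *m B = 1%:M -> invmx A = B.
Proof.
move=> AB; have [uA _] := mulmx1_unit AB.
by rewrite -[invmx A]mulmx1 -AB mulmxA mulVmx // mul1mx.
Qed.

Lemma unitary_adjmxC (A : 'M[C]_2) : unitary A -> adjmx A *m A = 1%:M.
Proof. exact: mulmx1C. Qed.

Lemma invmx_unitary (A : 'M[C]_2) : unitary A -> invmx A = adjmx A.
Proof. exact: mulmx1_invmx. Qed.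

Lemma unitary_adjmx (A : 'M[C]_2) : unitary A -> unitary (adjmx A).
Proof. by move=> UA; rewrite /unitary adjmxK unitary_adjmxC. Qed.

Lemma unitary1 : unitary (1%:M : 'M[C]_2).
Proof. by rewrite /unitary adjmx1 mulmx1. Qed.

Lemma unitaryM (A B : 'M[C]_2) : unitary A -> unitary B -> unitary (A *m B).
Proof. by move=> UA UB; rewrite /unitary adjmxM mulmxA -(mulmxA A) UB mulmx1. Qed.

Lemma unitary_conj (V A : 'M[C]_2) :
  unitary V -> unitary A -> unitary (adjmx V *m A *m V).
Proof.
by move=> UV UA; apply: unitaryM => //; apply: unitaryM => //; apply: unitary_adjmx.
Qed.

Lemma SU2_unitmx (A : 'M[C]_2) : SU2 A -> A \in unitmx.
Proof. by case=> _ dA; rewrite unitmxE dA unitr1. Qed.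

Lemma SU2_adjmx (A : 'M[C]_2) : SU2 A -> SU2 (adjmx A).
Proof.
by case=> UA dA; split; [apply: unitary_adjmx | rewrite det_adjmx dA conjC1].
Qed.

Lemma SU2M (A B : 'M[C]_2) : SU2 A -> SU2 B -> SU2 (A *m B).
Proof.
by case=> UA dA [UB dB]; split; [apply: unitaryM | rewrite det_mulmx dA dB mulr1].
Qed.

Lemma SU2_conj (V A : 'M[C]_2) : unitary V -> SU2 A -> SU2 (adjmx V *m A *m V).
Proof.
move=> UV [UA dA]; split; first exact: unitary_conj.
by rewrite !det_mulmx dA mulr1 -det_mulmx unitary_adjmxC // det1.
Qed.

(* No invertibility of [A] is needed: [invmx] is the identity on singular
   matrices. *)
Lemma invmx_conj (V A : 'M[C]_2) : unitary V ->
  invmx (adjmx V *m A *m V) = adjmx V *m invmx A *m V.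
Proof.
move=> UV; have [uVa uV] := mulmx1_unit (unitary_adjmxC UV).
have [uA | nuA] := boolP (A \in unitmx).
  apply: mulmx1_invmx; rewrite !mulmxA -(mulmxA _ V) UV mulmx1.
  by rewrite -(mulmxA _ A) mulmxV // mulmx1 unitary_adjmxC.
by rewrite !invmx_out // inE !unitmx_mul ?uVa ?uV //= andbT.
Qed.

Lemma invmxM n (A B : 'M[C]_n.+1) : A \in unitmx -> B \in unitmx ->
  invmx (A *m B) = invmx B *m invmx A.
Proof.
move=> uA uB; apply: mulmx1_invmx.
by rewrite mulmxA -(mulmxA A) mulmxV // mulmx1 mulmxV.
Qed.

Definition letter_mx (g h : 'M[C]_2) (p : fletter) : 'M[C]_2 :=
  let G := if p.1 is La then g else h in if p.2 then invmx G else G.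

Lemma word_map_cons p w (g h : 'M[C]_2) :
  word_map (p :: w) g h = letter_mx g h p *m word_map w g h.
Proof. by []. Qed.

Lemma word_map_cat u v (g h : 'M[C]_2) :
  word_map (u ++ v) g h = word_map u g h *m word_map v g h.
Proof.
elim: u => [|p u IH]; first by rewrite mul1mx.
by rewrite cat_cons !word_map_cons IH mulmxA.
Qed.

Section Units.
Variables g h : 'M[C]_2.
Hypotheses (ug : g \in unitmx) (uh : h \in unitmx).

Lemma letter_mx_unitmx p : letter_mx g h p \in unitmx.
Proof. by case: p => [[] []]; rewrite /letter_mx /= ?unitmx_inv. Qed.

Lemma letter_mx_flip c b : letter_mx g h (c, ~~ b) = invmx (letter_mx g h (c, b)).
Proof. by case: b; rewrite /letter_mx /= ?invmxK. Qed.

Lemma word_map_unitmx w : word_map w g h \in unitmx.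
Proof.
elim: w => [|p w IH]; first exact: unitmx1.
by rewrite word_map_cons unitmx_mul letter_mx_unitmx.
Qed.

Lemma word_map_inv_fword w : word_map (inv_fword w) g h = invmx (word_map w g h).
Proof.
elim: w => [|[c b] w IH]; first by rewrite invmx1.
rewrite /inv_fword map_cons rev_cons -cats1 word_map_cat -/(inv_fword w) IH.
rewrite word_map_cons invmxM ?letter_mx_unitmx ?word_map_unitmx //.
by rewrite word_map_cons mulmx1 letter_mx_flip.
Qed.

Lemma word_map_omega x y :
  word_map (omega x y) g h =
  word_map (pos_word x) g h *m invmx (word_map (pos_word y) g h).
Proof. by rewrite word_map_cat word_map_inv_fword. Qed.

End Units.

Lemma word_map_conj w (V g h : 'M[C]_2) : unitary V ->
  word_map w (adjmx V *m g *m V) (adjmx V *m h *m V) =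
  adjmx V *m word_map w g h *m V.
Proof.
move=> UV; elim: w => [|p w IH]; first by rewrite mulmx1 unitary_adjmxC.
rewrite !word_map_cons IH.
have -> : letter_mx (adjmx V *m g *m V) (adjmx V *m h *m V) p =
          adjmx V *m letter_mx g h p *m V.
  by case: p => [[] []]; rewrite /letter_mx /= ?invmx_conj.
by rewrite !mulmxA -(mulmxA _ V) UV mulmx1.
Qed.

Lemma word_map_SU2 w (g h : 'M[C]_2) : SU2 g -> SU2 h -> SU2 (word_map w g h).
Proof.
move=> sg sh; elim: w => [|p w IH]; first by split; [apply: unitary1 | rewrite det1].
rewrite word_map_cons; apply: SU2M => //.
by case: p => [[] []]; rewrite /letter_mx /= ?invmx_unitary;
  try apply: SU2_adjmx; try case: sg; try case: sh.
Qed.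

Lemma word_map_pos_scale x (a b : C) (g h : 'M[C]_2) :
  exists s, word_map (pos_word x) (a *: g) (b *: h) = s *: word_map (pos_word x) g h.
Proof.
elim: x => [|c x [s IH]]; first by exists 1; rewrite scale1r.
rewrite !word_map_cons IH; exists ((if c is La then a else b) * s).
by case: c; rewrite -scalemxAl -scalemxAr scalerA.
Qed.

Definition transition_mx (M : MCQFA C) (x : seq letter) : 'M[C]_2 :=
  foldl (fun A c => (if c is La then Ua M else Ub M) *m A) 1%:M x.

Lemma foldl_mulmx (U : letter -> 'M[C]_2) x n (v : 'M[C]_(2, n)) :
  foldl (fun v c => U c *m v) v x = foldl (fun A c => U c *m A) 1%:M x *m v.
Proof.
elim: x n v => [|c x IH] n v /=; first by rewrite mul1mx.
by rewrite IH [in RHS]IH mulmx1 mulmxA.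
Qed.

Lemma final_stateE M x : final_state M x = transition_mx M x *m u0 M.
Proof. exact: foldl_mulmx. Qed.

Lemma transition_mx_rcons M x c :
  transition_mx M (rcons x c) = (if c is La then Ua M else Ub M) *m transition_mx M x.
Proof. by rewrite /transition_mx -cats1 foldl_cat /= foldl_mulmx. Qed.

Lemma adjmx_transition_mx M x :
  adjmx (transition_mx M x) = word_map (pos_word x) (adjmx (Ua M)) (adjmx (Ub M)).
Proof.
elim/last_ind: x => [|x c IH]; first exact: adjmx1.
rewrite transition_mx_rcons adjmxM IH /pos_word map_rcons -cats1 word_map_cat.
by rewrite word_map_cons mulmx1; case: c.
Qed.

Lemma unitary_transition_mx M x : MCQFA_wf M -> unitary (transition_mx M x).
Proof.
case=> UA UB _; elim/last_ind: x => [|x c IH]; first exact: unitary1.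
by rewrite transition_mx_rcons; apply: unitaryM => //; case: c.
Qed.

Definition dotv n (u v : 'cV[C]_n) : C := (adjmx u *m v) 0 0.

Lemma dotvE n (u v : 'cV[C]_n) : dotv u v = \sum_i (u i 0)^* * v i 0.
Proof. by rewrite /dotv mxE; apply: eq_bigr => i _; rewrite !mxE. Qed.

Lemma dotvC n (u v : 'cV[C]_n) : dotv v u = (dotv u v)^*.
Proof.
rewrite !dotvE rmorph_sum; apply: eq_bigr => i _.
by rewrite rmorphM /= conjCK mulrC.
Qed.

Lemma dotvvE n (v : 'cV[C]_n) : dotv v v = \sum_i `|v i 0| ^+ 2.
Proof. by rewrite dotvE; apply: eq_bigr => i _; rewrite normCKC. Qed.

Lemma dotvZr n k (u v : 'cV[C]_n) : dotv u (k *: v) = k * dotv u v.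
Proof. by rewrite /dotv -scalemxAr mxE. Qed.

Lemma dotv_adjmx n (A : 'M[C]_n) u v : dotv u (adjmx A *m v) = dotv (A *m u) v.
Proof. by rewrite /dotv adjmxM mulmxA. Qed.

Lemma dotv_unitary (U : 'M[C]_2) u v : unitary U -> dotv (U *m u) (U *m v) = dotv u v.
Proof. by move=> UU; rewrite -dotv_adjmx mulmxA unitary_adjmxC // mul1mx. Qed.

Lemma dotv_eq0_of_support n (S : {set 'I_n}) (u v : 'cV[C]_n) :
  \sum_i `|u i 0| ^+ 2 = 1 -> \sum_(i in S) `|u i 0| ^+ 2 = 1 ->
  \sum_(i in S) `|v i 0| ^+ 2 = 0 -> dotv u v = 0.
Proof.
move=> u1 uS vS.
have sqr0 (P : pred 'I_n) (w : 'cV[C]_n) :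
    \sum_(i | P i) `|w i 0| ^+ 2 = 0 -> forall i, P i -> w i 0 = 0.
  move=> w0 i Pi; apply/eqP; rewrite -normr_eq0 -sqrf_eq0; apply/eqP.
  by apply: (psumr_eq0P _ w0) => // j _; rewrite exprn_ge0.
have u0 : \sum_(i | i \notin S) `|u i 0| ^+ 2 = 0.
  by move: u1; rewrite (bigID (mem S)) /= uS -{2}[1]addr0 => /addrI.
rewrite dotvE big1 // => i _.
by have [/(sqr0 _ _ vS) -> | /(sqr0 _ _ u0) ->] := boolP (i \in S);
  rewrite ?mulr0 ?conjC0 ?mul0r.
Qed.

Lemma final_states_orthogonal M x y : MCQFA_wf M -> separates_exactly M x y ->
  dotv (final_state M x) (final_state M y) = 0.
Proof.
move=> wf; have unit z : \sum_i `|final_state M z i 0| ^+ 2 = 1.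
  rewrite -dotvvE final_stateE dotv_unitary; last exact: unitary_transition_mx.
  by case: wf => _ _ <-; rewrite dotvvE.
case=> [[px py] | [px py]]; first exact: dotv_eq0_of_support (unit x) px py.
by rewrite dotvC (dotv_eq0_of_support (unit y) py px) conjC0.
Qed.

Definition r2 : C := (sqrtC 2)^-1.

Lemma conj_r2 : r2^* = r2.
Proof. by apply/conj_Creal/ger0_real; rewrite invr_ge0 sqrtC_ge0 ler0n. Qed.

Lemma r2_sqr : 2 * (r2 * r2) = 1.
Proof. by rewrite /r2 -invfM -expr2 sqrtCK mulfV // pnatr_eq0. Qed.

Lemma mulii : 'i * 'i = -1 :> C.
Proof. by rewrite -expr2 sqrCi. Qed.

Lemma SU2_corner0 b c d : SU2 (mk2 0 b c d) -> [/\ d = 0, b = - c^* & c * c^* = 1].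
Proof.
rewrite /SU2 /unitary adjmx_mk2 mul_mk2 -mk2_1 det_mk2 => -[/mk2_inj[bb bd _ _] dt].
move: bb bd dt; rewrite !mul0r !add0r => bb bd /(canRL (@opprK C)) dt.
have d0 : d = 0.
  have : d^* * (b * b^*) = b^* * (b * d^*) by ring.
  by rewrite bb bd mulr1 mulr0 => /eqP; rewrite conjC_eq0 => /eqP.
have bc : b = - c^*.
  have : b^* * (b * c) = (b * b^*) * c by ring.
  by rewrite bb dt mul1r mulrN1 => <-; rewrite rmorphN /= conjCK opprK.
by split=> //; move: bb; rewrite bc rmorphN /= conjCK mulrNN mulrC.
Qed.

Lemma antidiag_conj_diag_i c : c * c^* = 1 ->
  exists R, unitary R /\ adjmx R *m mk2 0 (- c^*) c 0 *m R = D.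
Proof.
move=> cc; set R := mk2 1 1 (- 'i * c) ('i * c).
have conjR : adjmx R = mk2 1 ('i * c^*) 1 (- 'i * c^*).
  by rewrite adjmx_mk2 !rmorphM !rmorphN /= conjCi conjC1 opprK mulNr.
have RR : R *m adjmx R = 2 *: 1%:M.
  rewrite conjR mul_mk2 -mk2_1 scale_mk2; have ii := mulii.
  by move: ('i : C) (c^*) ii cc => I cs ii cc; congr mk2; ring: ii cc.
have RNR : adjmx R *m mk2 0 (- c^*) c 0 *m R = 2 *: D.
  rewrite conjR diag_i_miE !mul_mk2 scale_mk2; have ii := mulii.
  by move: ('i : C) (c^*) ii cc => I cs ii cc; congr mk2; ring: ii cc.
exists (r2 *: R); rewrite /unitary adjmxZ conj_r2 -!scalemxAl -!scalemxAr.
by rewrite RR RNR !scalerA [r2 * r2 * 2]mulrC r2_sqr !scale1r.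
Qed.

Lemma SU2_corner0_conj_diag_i (N : 'M[C]_2) : SU2 N -> N i0 i0 = 0 ->
  exists R, unitary R /\ adjmx R *m N *m R = D.
Proof.
move=> + N0; rewrite [N]mx2E N0.
by case/SU2_corner0 => -> -> /antidiag_conj_diag_i.
Qed.

Lemma dotv_mkv a b x y : dotv (mkv a b) (mkv x y) = a^* * x + b^* * y.
Proof. by rewrite dotvE sum_ord2 !mxE. Qed.

Lemma unit_vector_completion (u : 'cV[C]_2) : dotv u u = 1 ->
  exists Q, unitary Q /\ forall Z, (adjmx Q *m Z *m Q) i0 i0 = dotv u (Z *m u).
Proof.
rewrite [u]cV2E dotv_mkv; move: (u i0 0) (u i1 0) => a b ab1.
exists (mk2 a (- b^*) b a^*); split => [|Z].
  have {}ab1 : a^* * a = 1 - b^* * b by rewrite -ab1 addrK.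
  rewrite /unitary adjmx_mk2 mul_mk2 -mk2_1 rmorphN /= !conjCK.
  by congr mk2; ring: ab1.
by rewrite [Z]mx2E adjmx_mk2 !mul_mk2 mul_mk2_mkv dotv_mkv !mxE /=; ring.
Qed.

Lemma isotropic_SU2_conj_diag_i (W : 'M[C]_2) u :
  SU2 W -> dotv u u = 1 -> dotv u (W *m u) = 0 ->
  exists V, unitary V /\ adjmx V *m W *m V = D.
Proof.
move=> sW /unit_vector_completion[Q [UQ QE]] Wu0.
have [R [UR RN]] : exists R, unitary R /\ adjmx R *m (adjmx Q *m W *m Q) *m R = D.
  by apply: SU2_corner0_conj_diag_i; rewrite ?QE //; apply: SU2_conj.
by exists (Q *m R); split; [apply: unitaryM | rewrite adjmxM !mulmxA in RN *].
Qed.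

Lemma unitary_scale_SU2 (U : 'M[C]_2) : unitary U -> exists k : C, SU2 (k *: U).
Proof.
move=> UU; set d := \det U.
have dd : d * d^* = 1 by rewrite /d -det_adjmx -det_mulmx UU det1.
set k := sqrtC d^*; have k2 : k ^+ 2 = d^* by apply: sqrtCK.
have kk : k * k^* = 1.
  have /eqP : (k * k^*) ^+ 2 = 1 by rewrite exprMn -rmorphXn /= k2 conjCK mulrC.
  rewrite sqrf_eq1 => /orP[/eqP // | /eqP kkN].
  by have := mul_conjC_ge0 k; rewrite kkN ler0N1.
exists k; split; last by rewrite detZ k2 mulrC.
by rewrite /unitary adjmxZ -scalemxAl -scalemxAr UU scalerA kk scale1r.
Qed.

Lemma separates_conj_diag_i (M : MCQFA C) x y :
  MCQFA_wf M -> separates_exactly M x y ->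
  exists g h : 'M[C]_2, SU2 g /\ SU2 h /\ word_map (omega x y) g h = D.
Proof.
move=> wf sep; have orth := final_states_orthogonal wf sep.
case: wf => UA UB; rewrite -dotvvE => u01.
have [ca sg] := unitary_scale_SU2 (unitary_adjmx UA).
have [cb sh] := unitary_scale_SU2 (unitary_adjmx UB).
set g := ca *: adjmx (Ua M); set h := cb *: adjmx (Ub M).
have W0 : dotv (u0 M) (word_map (omega x y) g h *m u0 M) = 0.
  have [UY _] := word_map_SU2 (pos_word y) sg sh.
  rewrite word_map_omega ?SU2_unitmx // invmx_unitary //.
  have [sx ->] := word_map_pos_scale x ca cb (adjmx (Ua M)) (adjmx (Ub M)).
  have [sy ->] := word_map_pos_scale y ca cb (adjmx (Ua M)) (adjmx (Ub M)).
  rewrite -!adjmx_transition_mx adjmxZ adjmxK -scalemxAl -scalemxAr scalerA.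
  by rewrite -scalemxAl dotvZr -mulmxA dotv_adjmx -!final_stateE orth mulr0.
have sW := word_map_SU2 (omega x y) sg sh.
have [V [UV WV]] := isotropic_SU2_conj_diag_i sW u01 W0.
exists (adjmx V *m g *m V), (adjmx V *m h *m V).
by rewrite word_map_conj //; split; [|split]; try apply: SU2_conj.
Qed.

Definition conj_automaton (g h V : 'M[C]_2) (u : 'cV[C]_2) : MCQFA C :=
  {| Ua := adjmx V *m adjmx g *m V; Ub := adjmx V *m adjmx h *m V;
     u0 := adjmx V *m u; acc := [set i0] |}.

Lemma conj_automaton_wf g h V u : unitary g -> unitary h -> unitary V ->
  dotv u u = 1 -> MCQFA_wf (conj_automaton g h V u).
Proof.
move=> Ug Uh UV u1; split=> /=; try by apply/unitary_conj/unitary_adjmx.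
by rewrite -dotvvE dotv_unitary //; apply: unitary_adjmx.
Qed.

Lemma final_state_conj_automaton g h V u z : unitary V ->
  final_state (conj_automaton g h V u) z =
  adjmx V *m adjmx (word_map (pos_word z) g h) *m u.
Proof.
move=> UV; rewrite final_stateE -[transition_mx _ _]adjmxK adjmx_transition_mx /=.
rewrite !adjmxM !adjmxK !mulmxA word_map_conj // !adjmxM adjmxK.
by rewrite -!mulmxA (mulmxA V) UV mul1mx.
Qed.

Lemma diag_i_mi_frame : exists (B : 'M[C]_2) (w : 'cV[C]_2),
  [/\ unitary B, dotv w w = 1, B *m w = mkv 1 0 & B *m (D *m w) = mkv 0 1].
Proof.
have ii := mulii; have rr := r2_sqr.
exists (mk2 r2 r2 (- 'i * r2) ('i * r2)), (mkv r2 r2); split.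
- rewrite /unitary adjmx_mk2 mul_mk2 -mk2_1 !rmorphM !rmorphN /= conjCi conj_r2.
  by congr mk2; ring: ii rr.
- by rewrite dotv_mkv conj_r2; ring: rr.
- by rewrite mul_mk2_mkv; congr mkv; ring: rr.
- by rewrite diag_i_miE mul_mk2_mkv mul_mk2_mkv; congr mkv; ring: ii rr.
Qed.

Lemma diag_i_conj_separates x y g h : SU2 g -> SU2 h ->
  word_map (omega x y) g h = D ->
  exists M : MCQFA C, MCQFA_wf M /\ separates_exactly M x y.
Proof.
move=> sg sh; rewrite word_map_omega ?SU2_unitmx //.
have [UX _] := word_map_SU2 (pos_word x) sg sh.
have [UY _] := word_map_SU2 (pos_word y) sg sh.
rewrite invmx_unitary // => XY.
have [B [w [UB w1 Bw BDw]]] := diag_i_mi_frame.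
set X := word_map (pos_word x) g h in UX XY.
have UV : unitary (adjmx (B *m X)) by apply/unitary_adjmx/unitaryM.
have fin z : final_state (conj_automaton g h (adjmx (B *m X)) w) z =
             B *m X *m adjmx (word_map (pos_word z) g h) *m w.
  by rewrite final_state_conj_automaton // adjmxK.
exists (conj_automaton g h (adjmx (B *m X)) w); split.
  by apply: conj_automaton_wf => //; [case: sg | case: sh].
left; rewrite /acc_prob !big_set1 !fin -/X -(mulmxA B) UX mulmx1 Bw.
rewrite -(mulmxA B) XY -mulmxA BDw !mxE /=.
by rewrite normr1 normr0 expr1n expr0n.
Qed.

End ExactSeparation.

Theorem fact1 (C : numClosedFieldType) (x y : seq letter) :
  x <> y ->
  ((exists M : MCQFA C, MCQFA_wf M /\ separates_exactly M x y) <->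
   (exists g h : 'M[C]_2, SU2 g /\ SU2 h /\
      word_map (omega x y) g h = diag_i_mi C)).
Proof.
move=> _; split=> [[M [wf sep]] | [g [h [sg [sh wD]]]]].
  exact: separates_conj_diag_i wf sep.
exact: diag_i_conj_separates sg sh wD.
Qed.
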